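(* Let $c>0$, $\alpha>0$ and $F\in C^2(\mathbb{R}\times[0,\infty))$. Let $w(x,t)$ be the solution of the Cauchy problem for the forced wave equation $$\frac{\partial^2 w}{\partial t^2}= c^2 \frac{\partial^2 w}{\partial x^2}+F(x,t),\qquad w(x,0)=0,\qquad \frac{\partial w}{\partial t}(x,0)=0,$$ i.e. $w(x,t)=\frac{1}{2c}\int_0^t ds\int_{x-c(t-s)}^{x+c(t-s)}F(y,s)\,dy$. Define $$v(x,t)=\frac{2}{B(\alpha,\frac12)}\int_0^1(1-u^2)^{\alpha-1}\,w(x,ut)\,du .$$ Then $v$ solves the non-homogeneous Euler–Poisson–Darboux problem $$\frac{\partial^2 v}{\partial t^2}+\frac{2\alpha}{t}\frac{\partial v}{\partial t}= c^2 \frac{\partial^2 v}{\partial x^2}+\frac{2}{B(\alpha,\frac12)}\int_0^1(1-u^2)^{\alpha-1}F(x,ut)\,du,\quad t>0,$$ with $v(x,0)=0$ and $\frac{\partial v}{\partial t}(x,0)=0$.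
   Context: $B(a,b)=\Gamma(a)\Gamma(b)/\Gamma(a+b)$ denotes the Beta function. *)

From Stdlib Require Import Reals ClassicalEpsilon.
Open Scope R_scope.

Definition is_RInt (f : R -> R) (a b I : R) : Prop :=
  exists pr : Riemann_integrable f a b, RiemannInt pr = I.

(* Total Riemann integral (value irrelevant when f is not integrable). *)
Definition RInt (f : R -> R) (a b : R) : R :=
  epsilon (inhabits 0) (fun I => is_RInt f a b I).

Definition is_impint (f : R -> R) (a b l : R) : Prop :=
  (forall p q, a < p -> p <= q -> q < b -> exists I, is_RInt f p q I) /\
  (forall eps, 0 < eps -> exists d, 0 < d /\
     forall p q I, a < p -> p < a + d -> b - d < q -> q < b -> p <= q ->
       is_RInt f p q I -> Rabs (I - l) < eps).

Definition ImpInt (f : R -> R) (a b : R) : R :=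
  epsilon (inhabits 0) (fun l => is_impint f a b l).

Definition Beta (a b : R) : R :=
  ImpInt (fun s => Rpower s (a - 1) * Rpower (1 - s) (b - 1)) 0 1.

Definition deriv_within (D : R -> Prop) (f : R -> R) (x l : R) : Prop :=
  forall eps, 0 < eps -> exists d, 0 < d /\
    forall h, h <> 0 -> Rabs h < d -> D (x + h) ->
      Rabs ((f (x + h) - f x) / h - l) < eps.

Definition half_line (t : R) : Prop := 0 <= t.

Definition cont_half (g : R -> R -> R) : Prop :=
  forall x t, 0 <= t -> forall eps, 0 < eps -> exists d, 0 < d /\
    forall x' t', 0 <= t' -> Rabs (x' - x) < d -> Rabs (t' - t) < d ->
      Rabs (g x' t' - g x t) < eps.

Definition C2_half (F : R -> R -> R) : Prop :=
  exists F1 F2 F11 F12 F21 F22 : R -> R -> R,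
    (forall x t, 0 <= t ->
       derivable_pt_lim (fun y => F y t) x (F1 x t) /\
       deriv_within half_line (fun s => F x s) t (F2 x t) /\
       derivable_pt_lim (fun y => F1 y t) x (F11 x t) /\
       deriv_within half_line (fun s => F1 x s) t (F12 x t) /\
       derivable_pt_lim (fun y => F2 y t) x (F21 x t) /\
       deriv_within half_line (fun s => F2 x s) t (F22 x t)) /\
    cont_half F /\ cont_half F1 /\ cont_half F2 /\
    cont_half F11 /\ cont_half F12 /\ cont_half F21 /\ cont_half F22.

Definition wave_sol (c : R) (F : R -> R -> R) (x t : R) : R :=
  / (2 * c) * RInt (fun s => RInt (fun y => F y s) (x - c * (t - s)) (x + c * (t - s))) 0 t.

Definition epd_sol (c alpha : R) (F : R -> R -> R) (x t : R) : R :=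
  2 / Beta alpha (1/2) *
  ImpInt (fun u => Rpower (1 - u ^ 2) (alpha - 1) * wave_sol c F x (u * t)) 0 1.

(* The Euler-Poisson-Darboux solution v is a weighted mean over u in (0,1) of the wave
   solution w(x, u t), with weight (1 - u^2)^(alpha-1). Differentiating under the improper integral, v_t, v_tt and v_xx are the
   means of u w_t, u^2 w_tt and w_xx. Integrating by parts against
   d/du (1 - u^2)^alpha = -2 alpha u (1 - u^2)^(alpha-1) gives
   t * mean((1 - u^2) w_tt) = 2 alpha * mean(u w_t), so v_tt + (2 alpha / t) v_t is the mean
   of w_tt = c^2 w_xx + F. The initial conditions follow from w(x,0) = w_t(x,0) = 0.
   To differentiate w, Duhamel's formula is rewritten with a primitive of F in x, so that w
   and its derivatives are integrals of F and F_x along the characteristics x +- c (t - s). *)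

From Pilot Require Import Defs.
From Stdlib Require Import Reals Lra Lia FunctionalExtensionality ClassicalEpsilon.
From Coquelicot Require Import Coquelicot.
Open Scope R_scope.

Lemma RInt_correct_R (f : R -> R) a b : ex_RInt f a b -> is_RInt f a b (RInt f a b).
Proof. apply (RInt_correct (V := R_CompleteNormedModule)). Qed.

Lemma is_RInt_of_Riemann (f : R -> R) a b I : Defs.is_RInt f a b I -> is_RInt f a b I.
Proof.
  intros [pr Hpr]. rewrite <- Hpr, <- (RInt_Reals f a b pr).
  exact (RInt_correct_R f a b (ex_RInt_Reals_1 f a b pr)).
Qed.

Lemma Riemann_of_is_RInt (f : R -> R) a b I : is_RInt f a b I -> Defs.is_RInt f a b I.
Proof.
  intros H. assert (ex : ex_RInt f a b) by (exists I; exact H).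
  exists (ex_RInt_Reals_0 f a b ex). rewrite <- RInt_Reals. exact (is_RInt_unique f a b I H).
Qed.

Lemma Riemann_RInt_eq (f : R -> R) a b : ex_RInt f a b -> Defs.RInt f a b = RInt f a b.
Proof.
  intros ex. unfold Defs.RInt.
  assert (H : exists I, Defs.is_RInt f a b I)
    by (exists (RInt f a b); apply Riemann_of_is_RInt, RInt_correct_R, ex).
  symmetry. apply is_RInt_unique, is_RInt_of_Riemann. exact (epsilon_spec (inhabits 0) _ H).
Qed.

Lemma is_RInt_lin (f g : R -> R) a b If Ig k1 k2 : is_RInt f a b If -> is_RInt g a b Ig ->
  is_RInt (fun u => k1 * f u + k2 * g u) a b (k1 * If + k2 * Ig).
Proof.
  intros Hf Hg.
  apply (is_RInt_plus (V := R_NormedModule) (fun u => k1 * f u) (fun u => k2 * g u));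
    apply (is_RInt_scal (V := R_NormedModule)); assumption.
Qed.

Lemma is_RInt_Chasles_R (f : R -> R) a b c l1 l2 :
  is_RInt f a b l1 -> is_RInt f b c l2 -> is_RInt f a c (l1 + l2).
Proof. apply (is_RInt_Chasles (V := R_NormedModule)). Qed.

(** * Improper integrals over (0,1) *)

Definition is_impint01 (f : R -> R) (l : R) : Prop :=
  (forall p q, 0 < p -> p <= q -> q < 1 -> ex_RInt f p q) /\
  (forall eps, 0 < eps -> exists d, 0 < d /\
     forall p q, 0 < p -> p < d -> 1 - d < q -> q < 1 -> p <= q ->
       Rabs (RInt f p q - l) < eps).

Lemma is_impint01_iff f l : is_impint01 f l <-> is_impint f 0 1 l.
Proof.
  split; intros [Hex Hlim]; split.
  - intros p q hp hpq hq. exists (RInt f p q).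
    apply Riemann_of_is_RInt, RInt_correct_R, Hex; assumption.
  - intros eps he. destruct (Hlim eps he) as [d [hd Hd]]. exists d. split; [exact hd|].
    intros p q I hp hp' hq hq' hpq HI.
    rewrite <- (is_RInt_unique _ _ _ _ (is_RInt_of_Riemann _ _ _ _ HI)). apply Hd; lra.
  - intros p q hp hpq hq. destruct (Hex p q hp hpq hq) as [I HI].
    exists I. apply is_RInt_of_Riemann, HI.
  - intros eps he. destruct (Hlim eps he) as [d [hd Hd]]. exists d. split; [exact hd|].
    intros p q hp hp' hq hq' hpq. apply (Hd p q); try lra.
    destruct (Hex p q hp hpq hq') as [I HI].
    apply Riemann_of_is_RInt, RInt_correct_R. exists I. apply is_RInt_of_Riemann, HI.
Qed.

Lemma interval01_corners d : 0 < d -> exists p q, 0 < p /\ p < d /\ 1 - d < q /\ q < 1 /\ p <= q.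
Proof.
  intros hd. exists (Rmin d (1/2) / 2), (1 - Rmin d (1/2) / 2).
  pose proof (Rmin_l d (1/2)). pose proof (Rmin_r d (1/2)).
  assert (0 < Rmin d (1/2)) by (apply Rmin_pos; lra). lra.
Qed.

Lemma is_impint01_eq f l1 l2 : is_impint01 f l1 -> is_impint01 f l2 -> l1 = l2.
Proof.
  intros [_ H1] [_ H2]. destruct (Req_dec l1 l2) as [e|ne]; [exact e|exfalso].
  set (eps := Rabs (l1 - l2) / 2).
  assert (he : 0 < eps) by (unfold eps; assert (0 < Rabs (l1 - l2)) by (apply Rabs_pos_lt; lra); lra).
  destruct (H1 eps he) as [d1 [hd1 D1]]. destruct (H2 eps he) as [d2 [hd2 D2]].
  destruct (interval01_corners (Rmin d1 d2)) as [p [q [hp [hpd [hqd [hq hpq]]]]]].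
  { apply Rmin_pos; assumption. }
  pose proof (Rmin_l d1 d2). pose proof (Rmin_r d1 d2).
  specialize (D1 p q hp ltac:(lra) ltac:(lra) hq hpq).
  specialize (D2 p q hp ltac:(lra) ltac:(lra) hq hpq).
  apply Rabs_lt_between in D1, D2. unfold eps in *.
  unfold Rabs in *. destruct (Rcase_abs (l1 - l2)); lra.
Qed.

Lemma is_impint01_unique f l : is_impint01 f l -> ImpInt f 0 1 = l.
Proof.
  intros H. unfold ImpInt.
  assert (E : exists l, is_impint f 0 1 l) by (exists l; apply is_impint01_iff, H).
  apply (is_impint01_eq f); [apply is_impint01_iff, (epsilon_spec (inhabits 0) _ E) | exact H].
Qed.

Lemma is_impint01_ext f g l : (forall u, 0 < u < 1 -> f u = g u) ->
  is_impint01 f l -> is_impint01 g l.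
Proof.
  intros E [Hex Hlim].
  assert (Eint : forall p q, 0 < p -> p <= q -> q < 1 -> RInt f p q = RInt g p q).
  { intros p q hp hpq hq. apply RInt_ext. intros x hx.
    rewrite Rmin_left, Rmax_right in hx by lra. apply E. lra. }
  split.
  - intros p q hp hpq hq. apply (ex_RInt_ext f); [|apply Hex; assumption].
    intros x hx. rewrite Rmin_left, Rmax_right in hx by lra. apply E. lra.
  - intros eps he. destruct (Hlim eps he) as [d [hd D]]. exists d. split; [exact hd|].
    intros p q hp hp' hq hq' hpq. rewrite <- Eint by assumption. apply D; assumption.
Qed.

Lemma is_impint01_lin f g l1 l2 k1 k2 : is_impint01 f l1 -> is_impint01 g l2 ->
  is_impint01 (fun u => k1 * f u + k2 * g u) (k1 * l1 + k2 * l2).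
Proof.
  intros [A1 B1] [A2 B2].
  assert (Eint : forall p q, 0 < p -> p <= q -> q < 1 ->
    RInt (fun u => k1 * f u + k2 * g u) p q = k1 * RInt f p q + k2 * RInt g p q).
  { intros p q hp hpq hq. apply is_RInt_unique, is_RInt_lin; apply RInt_correct_R; auto. }
  split.
  - intros p q hp hpq hq. eexists. apply is_RInt_lin; apply RInt_correct_R; auto.
  - intros eps he.
    assert (hk : 0 < Rabs k1 + Rabs k2 + 1) by (pose proof (Rabs_pos k1); pose proof (Rabs_pos k2); lra).
    set (e' := eps / (Rabs k1 + Rabs k2 + 1)).
    assert (he' : 0 < e') by (apply Rdiv_lt_0_compat; assumption).
    destruct (B1 e' he') as [d1 [hd1 D1]]. destruct (B2 e' he') as [d2 [hd2 D2]].
    exists (Rmin d1 d2). split; [apply Rmin_pos; assumption|].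
    intros p q hp hp' hq hq' hpq. pose proof (Rmin_l d1 d2). pose proof (Rmin_r d1 d2).
    rewrite Eint by assumption.
    specialize (D1 p q hp ltac:(lra) ltac:(lra) hq' hpq).
    specialize (D2 p q hp ltac:(lra) ltac:(lra) hq' hpq).
    replace (k1 * RInt f p q + k2 * RInt g p q - (k1 * l1 + k2 * l2))
      with (k1 * (RInt f p q - l1) + k2 * (RInt g p q - l2)) by ring.
    eapply Rle_lt_trans; [apply Rabs_triang|]. rewrite !Rabs_mult.
    assert (E : (Rabs k1 + Rabs k2 + 1) * e' = eps) by (unfold e'; field; lra).
    pose proof (Rabs_pos k1). pose proof (Rabs_pos k2). nra.
Qed.

Lemma is_impint01_abs_le f w l K M : 0 <= M ->
  (forall u, 0 < u < 1 -> Rabs (f u) <= M * w u) ->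
  is_impint01 f l -> is_impint01 w K -> Rabs l <= M * K.
Proof.
  intros hM Hb [A1 B1] [A2 B2].
  destruct (Rle_dec (Rabs l) (M * K)) as [h|h]; [exact h|exfalso].
  set (eps := (Rabs l - M * K) / (2 * (M + 1))).
  assert (he : 0 < eps) by (unfold eps; apply Rdiv_lt_0_compat; lra).
  destruct (B1 eps he) as [d1 [hd1 D1]]. destruct (B2 eps he) as [d2 [hd2 D2]].
  destruct (interval01_corners (Rmin d1 d2)) as [p [q [hp [hpd [hqd [hq hpq]]]]]].
  { apply Rmin_pos; assumption. }
  pose proof (Rmin_l d1 d2). pose proof (Rmin_r d1 d2).
  specialize (D1 p q hp ltac:(lra) ltac:(lra) hq hpq).
  specialize (D2 p q hp ltac:(lra) ltac:(lra) hq hpq).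
  assert (N : Rabs (RInt f p q) <= M * RInt w p q).
  { apply (norm_RInt_le f (fun u => M * w u) p q); [exact hpq| |apply RInt_correct_R; auto|].
    - intros x hx. apply Hb. lra.
    - apply (is_RInt_scal w p q M (RInt w p q)), RInt_correct_R; auto. }
  apply Rabs_lt_between in D1, D2.
  pose proof (Rabs_triang_inv l (RInt f p q)).
  assert (Rabs (l - RInt f p q) < eps) by (apply Rabs_lt_between; lra).
  assert (M * RInt w p q <= M * (K + eps)) by (apply Rmult_le_compat_l; lra).
  assert (E : 2 * (M + 1) * eps = Rabs l - M * K) by (unfold eps; field; lra).
  nra.
Qed.

Lemma inv_INR_shift_lt d : 0 < d -> exists N : nat, forall n, (n >= N)%nat -> / (INR n + 3) < d.
Proof.
  intros hd. destruct (archimed_cor1 d hd) as [N [h1 h2]]. exists N. intros n hn.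
  apply lt_INR in h2. apply le_INR in hn. simpl in h2.
  eapply Rle_lt_trans; [|exact h1]. apply Rinv_le_contravar; lra.
Qed.

(* The integrals over [1/(n+3), 1 - 1/(n+3)] form a Cauchy sequence; its limit is the integral. *)
Lemma ex_impint01_Cauchy (f : R -> R) :
  (forall p q, 0 < p -> p <= q -> q < 1 -> ex_RInt f p q) ->
  (forall eps, 0 < eps -> exists d, 0 < d /\ forall p p' q q', 0 < p < d -> 0 < p' < d ->
      1 - d < q < 1 -> 1 - d < q' < 1 -> Rabs (RInt f p q - RInt f p' q') < eps) ->
  exists l, is_impint01 f l.
Proof.
  intros Hex C.
  set (pn := fun n : nat => / (INR n + 3)).
  assert (hpn : forall n, 0 < pn n <= 1/3).
  { intros n. unfold pn. pose proof (pos_INR n). split; [apply Rinv_0_lt_compat; lra|].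
    replace (1/3) with (/3) by field. apply Rinv_le_contravar; lra. }
  set (s := fun n => RInt f (pn n) (1 - pn n)).
  assert (Cs : Cauchy_crit s).
  { intros eps he. destruct (C eps he) as [d [hd D]]. destruct (inv_INR_shift_lt d hd) as [N HN].
    exists N. intros n m hn hm. unfold Rdist, s.
    pose proof (HN n hn). pose proof (HN m hm). pose proof (hpn n). pose proof (hpn m).
    apply D; fold (pn n) (pn m) in *; lra. }
  destruct (Rcomplete.R_complete s Cs) as [l Hl]. exists l. split; [exact Hex|].
  intros eps he. destruct (C (eps / 2) ltac:(lra)) as [d [hd D]]. exists d. split; [exact hd|].
  intros p q hp hp' hq hq' hpq.
  destruct (Hl (eps / 2) ltac:(lra)) as [N1 HN1]. destruct (inv_INR_shift_lt d hd) as [N2 HN2].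
  specialize (HN1 (N1 + N2)%nat ltac:(lia)). specialize (HN2 (N1 + N2)%nat ltac:(lia)).
  pose proof (hpn (N1 + N2)%nat). unfold Rdist in HN1.
  assert (X : Rabs (RInt f p q - s (N1 + N2)%nat) < eps / 2)
    by (unfold s; apply D; fold (pn (N1 + N2)%nat) in *; lra).
  replace (RInt f p q - l) with ((RInt f p q - s (N1 + N2)%nat) + (s (N1 + N2)%nat - l)) by ring.
  eapply Rle_lt_trans; [apply Rabs_triang|]. lra.
Qed.

Section Dominated.

Variables (B PB : R -> R).
Hypothesis B_cont : forall u, 0 < u < 1 -> continuous B u.
Hypothesis PB_deriv : forall u, 0 < u < 1 -> is_derive PB u (B u).
Hypothesis PB_Cauchy_0 : forall eps, 0 < eps -> exists d, 0 < d /\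
  forall x y, 0 < x < d -> 0 < y < d -> Rabs (PB x - PB y) < eps.
Hypothesis PB_Cauchy_1 : forall eps, 0 < eps -> exists d, 0 < d /\
  forall x y, 1 - d < x < 1 -> 1 - d < y < 1 -> Rabs (PB x - PB y) < eps.

Variables (f : R -> R) (M : R).
Hypothesis M_ge0 : 0 <= M.
Hypothesis f_ex : forall p q, 0 < p -> p <= q -> q < 1 -> ex_RInt f p q.
Hypothesis f_dominated : forall u, 0 < u < 1 -> Rabs (f u) <= M * B u.

Lemma ex_RInt_in01 x y : 0 < x < 1 -> 0 < y < 1 -> ex_RInt f x y.
Proof.
  intros hx hy. destruct (Rle_dec x y); [apply f_ex; lra|].
  apply (ex_RInt_swap (V := R_NormedModule)). apply f_ex; lra.
Qed.

Lemma RInt_dominated_le x y : 0 < x < 1 -> 0 < y < 1 ->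
  Rabs (RInt f x y) <= M * Rabs (PB y - PB x).
Proof.
  assert (K : forall x y, 0 < x < 1 -> 0 < y < 1 -> x <= y ->
            Rabs (RInt f x y) <= M * Rabs (PB y - PB x)).
  { intros x' y' hx hy hxy.
    assert (HB : is_RInt B x' y' (PB y' - PB x')).
    { apply (is_RInt_derive (V := R_CompleteNormedModule));
        intros z hz; rewrite Rmin_left, Rmax_right in hz by lra;
        [apply PB_deriv | apply B_cont]; lra. }
    eapply Rle_trans.
    - apply (norm_RInt_le f (fun u => M * B u) x' y'); [exact hxy| |apply RInt_correct_R, f_ex; lra|].
      + intros z hz. apply f_dominated. lra.
      + apply (is_RInt_scal B x' y' M), HB.
    - apply Rmult_le_compat_l; [exact M_ge0|apply Rle_abs]. }
  intros hx hy. destruct (Rle_dec x y); [apply K; lra|].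
  rewrite <- (opp_RInt_swap (V := R_CompleteNormedModule)) by (apply ex_RInt_in01; assumption).
  change (opp (RInt f y x)) with (- RInt f y x).
  rewrite Rabs_Ropp, Rabs_minus_sym. apply K; lra.
Qed.

Lemma RInt_dominated_Cauchy eps : 0 < eps -> exists d, 0 < d /\
  forall p p' q q', 0 < p < d -> 0 < p' < d -> 1 - d < q < 1 -> 1 - d < q' < 1 ->
    Rabs (RInt f p q - RInt f p' q') < eps.
Proof.
  intros he. set (e' := eps / (2 * (M + 1))).
  assert (he' : 0 < e') by (unfold e'; apply Rdiv_lt_0_compat; lra).
  destruct (PB_Cauchy_0 e' he') as [d0 [hd0 D0]]. destruct (PB_Cauchy_1 e' he') as [d1 [hd1 D1]].
  exists (Rmin (Rmin d0 d1) (1/2)). split; [repeat apply Rmin_pos; lra|].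
  intros p p' q q' hp hp' hq hq'.
  pose proof (Rmin_l (Rmin d0 d1) (1/2)). pose proof (Rmin_r (Rmin d0 d1) (1/2)).
  pose proof (Rmin_l d0 d1). pose proof (Rmin_r d0 d1).
  assert (E : RInt f p q = RInt f p p' + RInt f p' q' + RInt f q' q).
  { apply is_RInt_unique. apply is_RInt_Chasles_R with q'; [apply is_RInt_Chasles_R with p'|].
    all: apply RInt_correct_R, ex_RInt_in01; lra. }
  rewrite E. replace (RInt f p p' + RInt f p' q' + RInt f q' q - RInt f p' q')
    with (RInt f p p' + RInt f q' q) by ring.
  eapply Rle_lt_trans; [apply Rabs_triang|].
  pose proof (RInt_dominated_le p p' ltac:(lra) ltac:(lra)).
  pose proof (RInt_dominated_le q' q ltac:(lra) ltac:(lra)).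
  assert (Rabs (PB p' - PB p) < e') by (apply D0; lra).
  assert (Rabs (PB q - PB q') < e') by (apply D1; lra).
  assert (EE : 2 * (M + 1) * e' = eps) by (unfold e'; field; lra).
  nra.
Qed.

Lemma ex_impint01_dominated : exists l, is_impint01 f l.
Proof. apply ex_impint01_Cauchy; [exact f_ex | exact RInt_dominated_Cauchy]. Qed.

End Dominated.

Lemma is_impint01_0 : is_impint01 (fun _ => 0) 0.
Proof.
  assert (H : forall p q, is_RInt (fun _ : R => 0) p q 0).
  { intros p q. pose proof (is_RInt_const (V := R_NormedModule) p q 0) as H.
    change (scal (q - p) 0) with ((q - p) * 0) in H. rewrite Rmult_0_r in H. exact H. }
  split; [intros p q _ _ _; exists 0; apply H|].
  intros eps he. exists 1. split; [lra|]. intros p q _ _ _ _ _.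
  rewrite (is_RInt_unique _ _ _ _ (H p q)), Rminus_eq_0, Rabs_R0. exact he.
Qed.

Lemma is_impint01_derive_vanishing (f G : R -> R) :
  (forall u, 0 < u < 1 -> is_derive G u (f u)) -> (forall u, 0 < u < 1 -> continuous f u) ->
  (forall eps, 0 < eps -> exists d, 0 < d /\ forall q, 1 - d < q < 1 -> Rabs (G q) < eps) ->
  (forall eps, 0 < eps -> exists d, 0 < d /\ forall p, 0 < p < d -> Rabs (G p) < eps) ->
  is_impint01 f 0.
Proof.
  intros D C L1 L0.
  assert (I : forall p q, 0 < p -> p <= q -> q < 1 -> is_RInt f p q (G q - G p)).
  { intros p q hp hpq hq. apply (is_RInt_derive (V := R_CompleteNormedModule));
      intros z hz; rewrite Rmin_left, Rmax_right in hz by lra; [apply D | apply C]; lra. }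
  split; [intros p q hp hpq hq; eexists; apply I; assumption|].
  intros eps he. destruct (L1 (eps / 2) ltac:(lra)) as [d1 [hd1 D1]].
  destruct (L0 (eps / 2) ltac:(lra)) as [d0 [hd0 D0]].
  exists (Rmin d0 d1). split; [apply Rmin_pos; assumption|]. intros p q hp hp' hq hq' hpq.
  pose proof (Rmin_l d0 d1). pose proof (Rmin_r d0 d1).
  rewrite (is_RInt_unique _ _ _ _ (I p q hp hpq hq')), Rminus_0_r.
  eapply Rle_lt_trans; [apply Rabs_triang|]. rewrite Rabs_Ropp.
  assert (Rabs (G q) < eps / 2) by (apply D1; lra). assert (Rabs (G p) < eps / 2) by (apply D0; lra).
  lra.
Qed.

(** * The weight (1 - u^2)^(a-1) *)

Definition epd_weight (a u : R) : R := Rpower (1 - u ^ 2) (a - 1).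

(* An integrable majorant of [epd_weight a] on (0,1), with an explicit primitive. *)
Definition weight_majorant (a u : R) : R := 1 + Rpower (1 - u) (a - 1).
Definition weight_majorant_prim (a u : R) : R := u - Rpower (1 - u) a / a.

Lemma exp_le x y : x <= y -> exp x <= exp y.
Proof. intros [H|H]; [apply Rlt_le, exp_increasing, H | subst; apply Rle_refl]. Qed.

Lemma Rpower_pred a z : 0 < z -> Rpower z a = z * Rpower z (a - 1).
Proof.
  intros hz. unfold Rpower. replace (a * ln z) with (ln z + (a - 1) * ln z) by ring.
  rewrite exp_plus, exp_ln by exact hz. reflexivity.
Qed.

Lemma Rpower_le_1 a z : 0 < a -> 0 < z <= 1 -> Rpower z a <= 1.
Proof.
  intros ha hz. unfold Rpower. rewrite <- exp_0. apply exp_le.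
  assert (ln z <= 0) by (rewrite <- ln_1; apply ln_le; lra). nra.
Qed.

Lemma Rpower_lt_small a : 0 < a -> forall eps, 0 < eps ->
  exists d, 0 < d /\ forall z, 0 < z < d -> Rpower z a < eps.
Proof.
  intros ha eps he. exists (Rpower eps (/ a)). split; [apply exp_pos|].
  intros z hz. replace eps with (Rpower (Rpower eps (/ a)) a).
  - apply Rlt_Rpower_l; lra.
  - rewrite Rpower_mult, Rinv_l, Rpower_1 by lra. reflexivity.
Qed.

Lemma epd_weight_pos a u : 0 < epd_weight a u.
Proof. apply exp_pos. Qed.

Lemma epd_weight_le_majorant a u : 0 < u < 1 -> epd_weight a u <= weight_majorant a u.
Proof.
  intros hu. unfold epd_weight, weight_majorant, Rpower.
  pose proof (exp_pos ((a - 1) * ln (1 - u))).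
  destruct (Rle_dec 1 a).
  - assert (ln (1 - u ^ 2) <= 0) by (rewrite <- ln_1; apply ln_le; nra).
    assert (exp ((a - 1) * ln (1 - u ^ 2)) <= exp 0) by (apply exp_le; nra).
    rewrite exp_0 in *. lra.
  - assert (ln (1 - u) <= ln (1 - u ^ 2)) by (apply ln_le; nra).
    assert (exp ((a - 1) * ln (1 - u ^ 2)) <= exp ((a - 1) * ln (1 - u))) by (apply exp_le; nra).
    lra.
Qed.

Lemma epd_weight_continuous a u : -1 < u < 1 -> continuous (epd_weight a) u.
Proof.
  intros hu. apply (ex_derive_continuous (V := R_NormedModule)).
  unfold epd_weight, Rpower. auto_derive. nra.
Qed.

Lemma is_derive_Rpower_weight a u : -1 < u < 1 ->
  is_derive (fun u => Rpower (1 - u ^ 2) a) u (-2 * a * u * epd_weight a u).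
Proof.
  intros hu. pose proof (Rpower_pred a (1 - u ^ 2) ltac:(nra)) as E.
  unfold epd_weight, Rpower in *. auto_derive; [nra|].
  replace (1 + - (u * (u * 1))) with (1 - u ^ 2) by ring. rewrite E. field. nra.
Qed.

Lemma is_derive_weight_majorant_prim a u : 0 < a -> u < 1 ->
  is_derive (weight_majorant_prim a) u (weight_majorant a u).
Proof.
  intros ha hu. pose proof (Rpower_pred a (1 - u) ltac:(lra)) as E.
  unfold weight_majorant_prim, weight_majorant, Rpower in *. auto_derive; [lra|].
  replace (1 + - u) with (1 - u) by ring. rewrite E. field. lra.
Qed.

Lemma weight_majorant_prim_Cauchy_0 a : 0 < a -> forall eps, 0 < eps -> exists d, 0 < d /\
  forall x y, 0 < x < d -> 0 < y < d ->
    Rabs (weight_majorant_prim a x - weight_majorant_prim a y) < eps.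
Proof.
  intros ha eps he.
  assert (C : continuity_pt (weight_majorant_prim a) 0).
  { apply continuity_pt_filterlim, (ex_derive_continuous (V := R_NormedModule)).
    eexists. apply is_derive_weight_majorant_prim; lra. }
  destruct (C (eps / 2) ltac:(lra)) as [d [hd D]].
  exists (Rmin d (1/2)). split; [apply Rmin_pos; lra|]. pose proof (Rmin_l d (1/2)).
  assert (N : forall z, 0 < z < Rmin d (1/2) ->
            Rabs (weight_majorant_prim a z - weight_majorant_prim a 0) < eps / 2).
  { intros z hz. apply (D z). split; [split; [exact I | lra]|].
    simpl; unfold R_dist. rewrite Rminus_0_r, Rabs_right; lra. }
  intros x y hx hy.
  replace (weight_majorant_prim a x - weight_majorant_prim a y) with
    ((weight_majorant_prim a x - weight_majorant_prim a 0)
     - (weight_majorant_prim a y - weight_majorant_prim a 0)) by ring.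
  eapply Rle_lt_trans; [apply Rabs_triang|]. rewrite Rabs_Ropp.
  pose proof (N x hx). pose proof (N y hy). lra.
Qed.

Lemma weight_majorant_prim_Cauchy_1 a : 0 < a -> forall eps, 0 < eps -> exists d, 0 < d /\
  forall x y, 1 - d < x < 1 -> 1 - d < y < 1 ->
    Rabs (weight_majorant_prim a x - weight_majorant_prim a y) < eps.
Proof.
  intros ha eps he.
  destruct (Rpower_lt_small a ha (eps * a / 3)) as [d [hd D]]; [nra|].
  exists (Rmin d (eps / 3)). split; [apply Rmin_pos; lra|].
  pose proof (Rmin_l d (eps / 3)). pose proof (Rmin_r d (eps / 3)).
  assert (S : forall z, 1 - Rmin d (eps / 3) < z < 1 -> 0 < Rpower (1 - z) a / a < eps / 3).
  { intros z hz. split; [apply Rdiv_lt_0_compat; [apply exp_pos | exact ha]|].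
    apply (Rmult_lt_reg_r a); [exact ha|]. field_simplify; [|lra].
    assert (Rpower (1 - z) a < eps * a / 3) by (apply D; lra). lra. }
  intros x y hx hy. unfold weight_majorant_prim.
  pose proof (S x hx). pose proof (S y hy). apply Rabs_lt_between. lra.
Qed.

Lemma ex_impint01_weighted a (g : R -> R) : 0 < a ->
  (forall u, 0 <= u <= 1 -> continuity_pt g u) ->
  exists l, is_impint01 (fun u => epd_weight a u * g u) l.
Proof.
  intros ha Hg.
  destruct (continuity_ab_maj (fun u => Rabs (g u)) 0 1 ltac:(lra)) as [m [Hm _]].
  { intros u hu. apply (continuity_pt_comp g Rabs); [apply Hg, hu | apply Rcontinuity_abs]. }
  apply (ex_impint01_dominated (weight_majorant a) (weight_majorant_prim a)) with (M := Rabs (g m)).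
  - intros u hu. apply (ex_derive_continuous (V := R_NormedModule)).
    unfold weight_majorant, Rpower. auto_derive. lra.
  - intros u hu. apply is_derive_weight_majorant_prim; lra.
  - apply weight_majorant_prim_Cauchy_0, ha.
  - apply weight_majorant_prim_Cauchy_1, ha.
  - apply Rabs_pos.
  - intros p q hp hpq hq. apply (ex_RInt_continuous (V := R_CompleteNormedModule)).
    intros z hz. rewrite Rmin_left, Rmax_right in hz by lra.
    apply (continuous_mult (K := R_AbsRing)); [apply epd_weight_continuous; lra|].
    apply continuity_pt_filterlim, Hg. lra.
  - intros u hu. rewrite Rabs_mult, (Rabs_right (epd_weight a u)) by (left; apply epd_weight_pos).
    pose proof (Hm u ltac:(lra)). pose proof (epd_weight_pos a u).
    pose proof (epd_weight_le_majorant a u hu). pose proof (Rabs_pos (g u)). nra.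
Qed.

Lemma ex_impint01_weight a : 0 < a -> exists K, is_impint01 (epd_weight a) K.
Proof.
  intros ha. destruct (ex_impint01_weighted a (fun _ => 1) ha) as [K HK].
  { intros u _. apply continuity_pt_const. intros ? ?. reflexivity. }
  exists K. eapply is_impint01_ext; [|exact HK]. intros u _. apply Rmult_1_r.
Qed.

Lemma difference_quotient_le (g g' : R -> R) s0 del e h : h <> 0 -> Rabs h < del ->
  (forall s, Rabs (s - s0) < del -> is_derive g s (g' s)) ->
  (forall s, Rabs (s - s0) < del -> Rabs (g' s - g' s0) <= e) ->
  Rabs ((g (s0 + h) - g s0) / h - g' s0) <= e.
Proof.
  intros hh hdel Dg Bg.
  assert (Near : forall s, Rmin s0 (s0 + h) <= s <= Rmax s0 (s0 + h) -> Rabs (s - s0) < del).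
  { intros s hs. eapply Rle_lt_trans; [apply (Rabs_le_between_min_max (s0 + h) s0 s)|].
    - rewrite Rmin_comm, Rmax_comm. exact hs.
    - replace (s0 + h - s0) with h by ring. exact hdel. }
  destruct (MVT_gen g s0 (s0 + h) g') as [s [hs Es]].
  - intros s hs. apply Dg, Near. split; apply Rlt_le, hs.
  - intros s hs. apply continuity_pt_filterlim, (ex_derive_continuous (V := R_NormedModule)).
    eexists. apply Dg, Near, hs.
  - rewrite Es. replace (g' s * (s0 + h - s0) / h - g' s0) with (g' s - g' s0) by (field; exact hh).
    apply Bg, Near, hs.
Qed.

(* The weight is integrable, so a bound on the difference quotients of [g u] that is uniform
   in [u] suffices (mean value theorem). *)
Lemma is_derive_ImpInt_weighted a (g dg : R -> R -> R) s0 : 0 < a ->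
  (forall s u, 0 <= u <= 1 -> continuity_pt (fun u => g u s) u) ->
  (forall u, 0 <= u <= 1 -> continuity_pt (fun u => dg u s0) u) ->
  (forall s u, 0 <= u <= 1 -> is_derive (fun s => g u s) s (dg u s)) ->
  (forall eps, 0 < eps -> exists eta, 0 < eta /\
     forall s, Rabs (s - s0) < eta -> forall u, 0 <= u <= 1 -> Rabs (dg u s - dg u s0) <= eps) ->
  is_derive (fun s => ImpInt (fun u => epd_weight a u * g u s) 0 1) s0
            (ImpInt (fun u => epd_weight a u * dg u s0) 0 1).
Proof.
  intros ha Gc DGc Gd U. apply is_derive_Reals.
  destruct (ex_impint01_weight a ha) as [K HK].
  destruct (ex_impint01_weighted a (fun u => dg u s0) ha DGc) as [ld Hld].
  rewrite (is_impint01_unique _ _ Hld).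
  intros eps he.
  assert (hK : 0 < Rabs K + 1) by (pose proof (Rabs_pos K); lra).
  set (e' := eps / (Rabs K + 1)).
  assert (he' : 0 < e') by (apply Rdiv_lt_0_compat; assumption).
  destruct (U e' he') as [eta [heta Heta]].
  exists (mkposreal eta heta). intros h hh hlt. simpl in hlt.
  destruct (ex_impint01_weighted a (fun u => g u (s0 + h)) ha (Gc (s0 + h))) as [l1 H1].
  destruct (ex_impint01_weighted a (fun u => g u s0) ha (Gc s0)) as [l0 H0].
  rewrite (is_impint01_unique _ _ H1), (is_impint01_unique _ _ H0).
  set (q := fun u => (g u (s0 + h) - g u s0) / h - dg u s0).
  assert (Hq : is_impint01 (fun u => epd_weight a u * q u) (1 * (/ h * l1 + - / h * l0) + -1 * ld)).
  { eapply is_impint01_ext; [|exact (is_impint01_lin _ _ _ _ 1 (-1)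
                                   (is_impint01_lin _ _ _ _ (/ h) (- / h) H1 H0) Hld)].
    intros u _. unfold q. field. exact hh. }
  assert (Bq : forall u, 0 < u < 1 -> Rabs (epd_weight a u * q u) <= e' * epd_weight a u).
  { intros u hu. rewrite Rabs_mult, Rabs_right by (left; apply epd_weight_pos).
    rewrite Rmult_comm. apply Rmult_le_compat_r; [left; apply epd_weight_pos|].
    apply (difference_quotient_le (g u) (dg u) s0 eta); try assumption.
    - intros s _. apply Gd. lra.
    - intros s hs. apply Heta; [exact hs | lra]. }
  pose proof (is_impint01_abs_le _ _ _ _ e' ltac:(lra) Bq Hq HK) as HB.
  replace ((l1 - l0) / h - ld) with (1 * (/ h * l1 + - / h * l0) + -1 * ld) by (field; exact hh).
  eapply Rle_lt_trans; [exact HB|].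
  assert (e' * K <= e' * Rabs K) by (apply Rmult_le_compat_l; [lra | apply Rle_abs]).
  assert (E : e' * (Rabs K + 1) = eps) by (unfold e'; field; lra). nra.
Qed.

(** * Joint continuity and parametric integrals *)

Definition cont2 (k : R -> R -> R) : Prop := forall x y, continuity_2d_pt k x y.

Definition is_partial_x (k k1 : R -> R -> R) : Prop :=
  forall z s, is_derive (fun z => k z s) z (k1 z s).

Lemma continuity_pt_fmult (f g : R -> R) x : continuity_pt f x -> continuity_pt g x ->
  continuity_pt (fun y => f y * g y) x.
Proof. exact (continuity_pt_mult f g x). Qed.

Lemma continuity_pt_one u : continuity_pt (fun _ => 1) u.
Proof. apply continuity_pt_const. intros ? ?. reflexivity. Qed.

Lemma continuity_2d_pt_comp k g1 g2 x y : continuity_2d_pt k (g1 x y) (g2 x y) ->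
  continuity_2d_pt g1 x y -> continuity_2d_pt g2 x y ->
  continuity_2d_pt (fun x y => k (g1 x y) (g2 x y)) x y.
Proof.
  intros Hk H1 H2 eps. destruct (Hk eps) as [d D].
  destruct (H1 d) as [d1 D1]. destruct (H2 d) as [d2 D2].
  assert (hd : 0 < Rmin d1 d2) by (apply Rmin_pos; apply cond_pos).
  exists (mkposreal _ hd). simpl. intros u v hu hv.
  pose proof (Rmin_l d1 d2). pose proof (Rmin_r d1 d2).
  apply D; [apply D1 | apply D2]; lra.
Qed.

Lemma continuity_2d_pt_snd f x y : continuity_2d_pt f x y -> continuity_pt (fun t => f x t) y.
Proof.
  intros H. apply continuity_pt_filterlim. intros P [e HP].
  destruct (H e) as [d D]. exists d. intros v hv. apply HP, D; [|exact hv].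
  rewrite Rminus_eq_0, Rabs_R0. apply cond_pos.
Qed.

Lemma continuity_2d_pt_fst f x y : continuity_2d_pt f x y -> continuity_pt (fun z => f z y) x.
Proof.
  intros H. apply continuity_pt_filterlim. intros P [e HP].
  destruct (H e) as [d D]. exists d. intros v hv. apply HP, D; [exact hv|].
  rewrite Rminus_eq_0, Rabs_R0. apply cond_pos.
Qed.

Lemma continuity_2d_pt_swap f x y : continuity_2d_pt f x y -> continuity_2d_pt (fun a b => f b a) y x.
Proof. intros H eps. destruct (H eps) as [d D]. exists d. intros u v hu hv. apply D; assumption. Qed.

Lemma continuity_2d_pt_lincomb f g k1 k2 x y : continuity_2d_pt f x y -> continuity_2d_pt g x y ->
  continuity_2d_pt (fun a b => k1 * f a b + k2 * g a b) x y.
Proof.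
  intros. apply continuity_2d_pt_plus; apply continuity_2d_pt_mult; auto; apply continuity_2d_pt_const.
Qed.

Lemma cont2_affine k b m1 m2 : cont2 k -> cont2 (fun u v => k (b + m1 * u + m2 * v) v).
Proof.
  intros Hk x y. apply (continuity_2d_pt_comp k (fun u v => b + m1 * u + m2 * v) (fun _ v => v)).
  - apply Hk.
  - repeat first [apply continuity_2d_pt_plus | apply continuity_2d_pt_mult
                 | apply continuity_2d_pt_const | apply continuity_2d_pt_id1
                 | apply continuity_2d_pt_id2].
  - apply continuity_2d_pt_id2.
Qed.

Lemma ex_RInt_cont2 h a u v : cont2 h -> ex_RInt (fun s => h a s) u v.
Proof.
  intros Hh. apply (ex_RInt_continuous (V := R_CompleteNormedModule)). intros s _.
  apply continuity_pt_filterlim, continuity_2d_pt_snd, Hh.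
Qed.

Lemma cont2_equicont_fst h a S : cont2 h -> forall eps, 0 < eps -> exists d, 0 < d /\
  forall a' s, Rabs (a' - a) < d -> Rabs s <= S -> Rabs (h a' s - h a s) < eps.
Proof.
  intros Hh eps he.
  destruct (uniform_continuity_2d h (a - 1) (a + 1) (- S) S (fun x y _ _ => Hh x y)
              (mkposreal eps he)) as [d D].
  assert (hd := cond_pos d).
  exists (Rmin d 1). split; [apply Rmin_pos; lra|].
  intros a' s ha hs. pose proof (Rmin_l d 1). pose proof (Rmin_r d 1).
  apply Rabs_le_between in hs. apply Rabs_lt_between' in ha as ha'.
  apply D; try lra. rewrite Rminus_eq_0, Rabs_R0. exact hd.
Qed.

Lemma cont2_equicont_scaled_snd h x t : cont2 h -> forall eps, 0 < eps -> exists d, 0 < d /\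
  forall s, Rabs (s - t) < d -> forall u, 0 <= u <= 1 -> Rabs (h x (u * s) - h x (u * t)) < eps.
Proof.
  intros Hh eps he. set (T := Rabs t + 1).
  destruct (uniform_continuity_2d h x x (- T) T (fun x y _ _ => Hh x y) (mkposreal eps he)) as [d D].
  assert (hd := cond_pos d).
  exists (Rmin d 1). split; [apply Rmin_pos; lra|]. intros s hs u hu.
  pose proof (Rmin_l d 1). pose proof (Rmin_r d 1).
  assert (Rabs s <= T) by (unfold T; pose proof (Rabs_triang_inv s t); lra).
  assert (Rabs (u * s) <= T) by (rewrite Rabs_mult, (Rabs_right u) by lra; pose proof (Rabs_pos s); nra).
  assert (Rabs (u * t) <= T)
    by (rewrite Rabs_mult, (Rabs_right u) by lra; pose proof (Rabs_pos t); unfold T; nra).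
  apply D; try lra; try (apply Rabs_le_between; assumption).
  - rewrite Rminus_eq_0, Rabs_R0. exact hd.
  - replace (u * s - u * t) with (u * (s - t)) by ring. rewrite Rabs_mult, (Rabs_right u) by lra.
    pose proof (Rabs_pos (s - t)). nra.
Qed.

Lemma continuity_2d_pt_locally_bounded h a t : continuity_2d_pt h a t -> exists d, 0 < d /\
  forall a' s, Rabs (a' - a) < d -> Rabs (s - t) < d -> Rabs (h a' s) <= Rabs (h a t) + 1.
Proof.
  intros Hh. destruct (Hh (mkposreal 1 Rlt_0_1)) as [d D]. exists d. split; [apply cond_pos|].
  intros a' s ha hs. specialize (D a' s ha hs). simpl in D.
  pose proof (Rabs_triang_inv (h a' s) (h a t)). lra.
Qed.

Lemma RInt_abs_le_const (f : R -> R) a b M : ex_RInt f a b ->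
  (forall x, Rmin a b <= x <= Rmax a b -> Rabs (f x) <= M) -> Rabs (RInt f a b) <= Rabs (b - a) * M.
Proof.
  intros ex Hb. apply (norm_RInt_le_const_abs (V := R_NormedModule) f a b); [exact Hb|].
  apply RInt_correct_R, ex.
Qed.

Lemma RInt_param_diff h a a' t t' : cont2 h ->
  RInt (fun s => h a' s) 0 t' - RInt (fun s => h a s) 0 t
  = RInt (fun s => h a' s - h a s) 0 t + RInt (fun s => h a' s) t t'.
Proof.
  intros Hh.
  replace (RInt (fun s => h a' s - h a s) 0 t)
    with (RInt (fun s => h a' s) 0 t - RInt (fun s => h a s) 0 t)
    by (symmetry; apply (RInt_minus (V := R_CompleteNormedModule)); apply ex_RInt_cont2, Hh).
  rewrite <- (RInt_Chasles (V := R_CompleteNormedModule) (fun s => h a' s) 0 t t')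
    by apply ex_RInt_cont2, Hh.
  change (plus ?x ?y) with (x + y). ring.
Qed.

Lemma cont2_RInt_param h : cont2 h -> cont2 (fun a t => RInt (fun s => h a s) 0 t).
Proof.
  intros Hh a t eps. set (T := Rabs t + 1). assert (heps := cond_pos eps).
  assert (hT : 0 < T) by (unfold T; pose proof (Rabs_pos t); lra).
  destruct (cont2_equicont_fst h a T Hh (eps / (2 * T))) as [d1 [hd1 D1]].
  { apply Rdiv_lt_0_compat; lra. }
  destruct (continuity_2d_pt_locally_bounded h a t (Hh a t)) as [d2 [hd2 D2]].
  set (K := Rabs (h a t) + 1). assert (hK : 0 < K) by (unfold K; pose proof (Rabs_pos (h a t)); lra).
  set (d := Rmin d1 (Rmin d2 (eps / (2 * K)))).
  assert (hd : 0 < d) by (repeat apply Rmin_pos; try lra; apply Rdiv_lt_0_compat; lra).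
  assert (hdd : d <= d1 /\ d <= d2 /\ d <= eps / (2 * K)).
  { unfold d. pose proof (Rmin_l d1 (Rmin d2 (eps / (2 * K)))).
    pose proof (Rmin_r d1 (Rmin d2 (eps / (2 * K)))).
    pose proof (Rmin_l d2 (eps / (2 * K))). pose proof (Rmin_r d2 (eps / (2 * K))). lra. }
  exists (mkposreal d hd). simpl. intros a' t' ha ht.
  rewrite RInt_param_diff by exact Hh. eapply Rle_lt_trans; [apply Rabs_triang|].
  assert (B1 : Rabs (RInt (fun s => h a' s - h a s) 0 t) <= Rabs (t - 0) * (eps / (2 * T))).
  { apply RInt_abs_le_const.
    - apply (ex_RInt_minus (V := R_NormedModule)); apply ex_RInt_cont2, Hh.
    - intros s hs. apply Rlt_le, D1; [lra|].
      pose proof (Rabs_le_between_min_max t 0 s) as Hs.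
      rewrite Rmin_comm, Rmax_comm, !Rminus_0_r in Hs. specialize (Hs hs). unfold T; lra. }
  assert (B2 : Rabs (RInt (fun s => h a' s) t t') <= Rabs (t' - t) * K).
  { apply RInt_abs_le_const; [apply ex_RInt_cont2, Hh|].
    intros s hs. apply D2; [lra|]. rewrite Rmin_comm, Rmax_comm in hs.
    eapply Rle_lt_trans; [apply (Rabs_le_between_min_max t' t s hs)|]. lra. }
  assert (Rabs (t - 0) * (eps / (2 * T)) < eps / 2).
  { rewrite Rminus_0_r. apply (Rmult_lt_reg_r (2 * T)); [lra|].
    field_simplify; [unfold T; lra | lra]. }
  assert (Rabs (t' - t) * K < eps / 2).
  { apply (Rmult_lt_reg_r (/ K)); [apply Rinv_0_lt_compat, hK|].
    replace (Rabs (t' - t) * K * / K) with (Rabs (t' - t)) by (field; lra).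
    replace (eps / 2 * / K) with (eps / (2 * K)) by (field; lra). lra. }
  lra.
Qed.

(** * Integrals along characteristics *)

Definition char_int (k : R -> R -> R) (c x t : R) : R := RInt (fun s => k (x + c * (t - s)) s) 0 t.

Lemma char_integrand_eq (k : R -> R -> R) c x t s :
  k (x + c * (t - s)) s = k (0 + 1 * (x + c * t) + - c * s) s.
Proof. f_equal. ring. Qed.

Lemma continuity_pt_char_integrand k c x t s0 : cont2 k ->
  continuity_pt (fun s => k (x + c * (t - s)) s) s0.
Proof.
  intros Hk. apply (continuity_pt_ext (fun s => k (0 + 1 * (x + c * t) + - c * s) s)).
  { intros s. symmetry. apply char_integrand_eq. }
  apply (continuity_2d_pt_snd (fun u v => k (0 + 1 * u + - c * v) v)), cont2_affine, Hk.
Qed.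

Lemma ex_RInt_char_integrand k c x t a b : cont2 k ->
  ex_RInt (fun s => k (x + c * (t - s)) s) a b.
Proof.
  intros Hk. apply (ex_RInt_continuous (V := R_CompleteNormedModule)). intros s _.
  apply continuity_pt_filterlim, continuity_pt_char_integrand, Hk.
Qed.

Lemma cont2_char_int k c : cont2 k -> cont2 (char_int k c).
Proof.
  intros Hk x t.
  set (G := fun a t => RInt (fun s => k (0 + 1 * a + - c * s) s) 0 t).
  apply continuity_2d_pt_ext with (fun x t => G (x + c * t) t).
  - intros x' t'. unfold G, char_int. apply RInt_ext. intros s _. symmetry. apply char_integrand_eq.
  - apply (continuity_2d_pt_comp G (fun x t => x + c * t) (fun _ t => t)).
    + apply (cont2_RInt_param (fun a s => k (0 + 1 * a + - c * s) s)), cont2_affine, Hk.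
    + apply continuity_2d_pt_plus; [apply continuity_2d_pt_id1|].
      apply continuity_2d_pt_mult; [apply continuity_2d_pt_const | apply continuity_2d_pt_id2].
    + apply continuity_2d_pt_id2.
Qed.

Lemma char_int_0 k c x : char_int k c x 0 = 0.
Proof. apply (RInt_point (V := R_CompleteNormedModule)). Qed.

Lemma is_derive_ext_eq (f g : R -> R) (x l l' : R) : is_derive f x l ->
  (forall t, f t = g t) -> l = l' -> is_derive g x l'.
Proof. intros H E El. subst. eapply is_derive_ext; eauto. Qed.

Lemma is_derive_lincomb (f g : R -> R) (x a b k1 k2 : R) : is_derive f x a -> is_derive g x b ->
  is_derive (fun y => k1 * f y + k2 * g y) x (k1 * a + k2 * b).
Proof.
  intros Ha Hb.
  apply (is_derive_plus (K := R_AbsRing) (V := R_NormedModule) (fun y => k1 * f y) (fun y => k2 * g y));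
    apply is_derive_scal; assumption.
Qed.

Lemma is_derive_affine_arg k k1 m b v u : is_partial_x k k1 ->
  is_derive (fun z => k (b + m * z) v) u (m * k1 (b + m * u) v).
Proof.
  intros D. apply (is_derive_comp (fun z => k z v) (fun z => b + m * z) u); [apply D|].
  auto_derive; [exact I | ring].
Qed.

Lemma is_derive_char_int_x k k1 c x t : cont2 k -> cont2 k1 -> is_partial_x k k1 ->
  is_derive (fun x => char_int k c x t) x (char_int k1 c x t).
Proof.
  intros Hk Hk1 D.
  assert (Dk : forall u v, is_derive (fun z => k (z + c * (t - v)) v) u (k1 (u + c * (t - v)) v)).
  { intros u v. eapply is_derive_ext_eq; [apply (is_derive_affine_arg k k1 1 (c * (t - v)) v u D)| |].
    - intros z. cbv beta. f_equal. ring.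
    - rewrite Rmult_1_l. f_equal. ring. }
  unfold char_int.
  replace (RInt (fun s => k1 (x + c * (t - s)) s) 0 t)
    with (RInt (fun s => Derive (fun u => k (u + c * (t - s)) s) x) 0 t)
    by (apply RInt_ext; intros s _; apply is_derive_unique, Dk).
  apply is_derive_RInt_param.
  - apply filter_forall. intros u s _. eexists. apply Dk.
  - intros s _. apply continuity_2d_pt_ext with (fun u v => k1 (c * t + 1 * u + - c * v) v).
    + intros u v. replace (k1 (c * t + 1 * u + - c * v) v) with (k1 (u + c * (t - v)) v)
        by (f_equal; ring).
      symmetry. apply is_derive_unique, Dk.
    + apply cont2_affine, Hk1.
  - apply filter_forall. intros y. apply ex_RInt_char_integrand, Hk.
Qed.

Lemma is_derive_char_int_t k k1 c x t : cont2 k -> cont2 k1 -> is_partial_x k k1 ->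
  is_derive (fun t => char_int k c x t) t (k x t + c * char_int k1 c x t).
Proof.
  intros Hk Hk1 D. unfold char_int.
  assert (Dk : forall u v, is_derive (fun z => k (x + c * (z - v)) v) u (c * k1 (x + c * (u - v)) v)).
  { intros u v. eapply is_derive_ext_eq; [apply (is_derive_affine_arg k k1 c (x - c * v) v u D)| |].
    - intros z. cbv beta. f_equal. ring.
    - f_equal. f_equal. ring. }
  assert (CD : forall u v, continuity_2d_pt (fun u v => Derive (fun z => k (x + c * (z - v)) v) u) u v).
  { intros u v. apply continuity_2d_pt_ext with (fun u v => c * k1 (x + c * u + - c * v) v).
    - intros u' v'. replace (x + c * u' + - c * v') with (x + c * (u' - v')) by ring.
      symmetry. apply is_derive_unique, Dk.
    - apply continuity_2d_pt_mult; [apply continuity_2d_pt_const | apply cont2_affine, Hk1]. }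
  assert (Ex : forall a b, locally t (fun y => ex_RInt (fun s => k (x + c * (y - s)) s) a b))
    by (intros a b; apply filter_forall; intros y; apply ex_RInt_char_integrand, Hk).
  replace (k x t + c * RInt (fun s => k1 (x + c * (t - s)) s) 0 t) with
    (RInt (fun s => Derive (fun u => k (x + c * (u - s)) s) t) 0 t
     + - k (x + c * (t - 0)) 0 * 0 + k (x + c * (t - t)) t * 1).
  - apply (is_derive_RInt_param_bound_comp (fun t s => k (x + c * (t - s)) s) (fun _ => 0) (fun t => t)).
    + apply Ex.
    + exists (mkposreal 1 Rlt_0_1). apply Ex.
    + exists (mkposreal 1 Rlt_0_1). apply Ex.
    + apply (is_derive_const (K := R_AbsRing) (V := R_NormedModule)).
    + apply (is_derive_id (K := R_AbsRing)).
    + exists (mkposreal 1 Rlt_0_1). apply filter_forall. intros y s _. eexists. apply Dk.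
    + intros s _. apply CD.
    + exists (mkposreal 1 Rlt_0_1). intros; apply CD.
    + exists (mkposreal 1 Rlt_0_1). intros; apply CD.
    + apply continuity_pt_char_integrand, Hk.
    + apply continuity_pt_char_integrand, Hk.
  - rewrite (RInt_ext _ (fun s => c * k1 (x + c * (t - s)) s))
      by (intros s _; apply is_derive_unique, Dk).
    rewrite (RInt_scal (V := R_CompleteNormedModule)) by apply ex_RInt_char_integrand, Hk1.
    replace (x + c * (t - t)) with x by ring. change (scal ?a ?b) with (a * b). ring.
Qed.

Section Weighted_means.

Variable alpha : R.
Hypothesis alpha_pos : 0 < alpha.

Definition weighted_mean (m : R -> R) (G : R -> R -> R) (x t : R) : R :=
  ImpInt (fun u => epd_weight alpha u * (m u * G x (u * t))) 0 1.

Lemma continuity_pt_scaled G x t u : cont2 G -> continuity_pt (fun u => G x (u * t)) u.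
Proof.
  intros HG. apply (continuity_pt_comp (fun u => u * t) (G x) u).
  - apply continuity_pt_fmult; [apply continuity_pt_id|].
    apply continuity_pt_const. intros ? ?. reflexivity.
  - apply continuity_2d_pt_snd, HG.
Qed.

Lemma is_impint01_weighted_mean m G x t : (forall u, 0 <= u <= 1 -> continuity_pt m u) -> cont2 G ->
  is_impint01 (fun u => epd_weight alpha u * (m u * G x (u * t))) (weighted_mean m G x t).
Proof.
  intros Hm HG.
  destruct (ex_impint01_weighted alpha (fun u => m u * G x (u * t)) alpha_pos) as [l Hl].
  { intros u hu. apply continuity_pt_fmult; [apply Hm, hu | apply continuity_pt_scaled, HG]. }
  unfold weighted_mean. rewrite (is_impint01_unique _ _ Hl). exact Hl.
Qed.

Lemma weighted_mean_at_0 m G x : (forall y, G y 0 = 0) -> weighted_mean m G x 0 = 0.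
Proof.
  intros G0. apply is_impint01_unique. eapply is_impint01_ext; [|exact is_impint01_0].
  intros u _. rewrite Rmult_0_r, G0. ring.
Qed.

Lemma is_derive_weighted_mean_t m m' G G' (x t : R) :
  (forall u, 0 <= u <= 1 -> continuity_pt m u) -> (forall u, 0 <= u <= 1 -> Rabs (m u) <= 1) ->
  (forall u, m' u = m u * u) ->
  cont2 G -> cont2 G' -> (forall x s, is_derive (G x) s (G' x s)) ->
  is_derive (weighted_mean m G x) t (weighted_mean m' G' x t).
Proof.
  intros Hm Bm Em HG HG' DG. unfold weighted_mean.
  replace (fun u => epd_weight alpha u * (m' u * G' x (u * t)))
    with (fun u => epd_weight alpha u * (m u * u * G' x (u * t)))
    by (apply functional_extensionality; intros u; rewrite Em; reflexivity).
  apply (is_derive_ImpInt_weighted alpha (fun u s => m u * G x (u * s))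
           (fun u s => m u * u * G' x (u * s)) t alpha_pos).
  - intros s u hu. apply continuity_pt_fmult; [apply Hm, hu | apply continuity_pt_scaled, HG].
  - intros u hu. apply continuity_pt_fmult; [|apply continuity_pt_scaled, HG'].
    apply continuity_pt_fmult; [apply Hm, hu | apply continuity_pt_id].
  - intros s u hu.
    apply (is_derive_ext_eq (fun s => m u * G x (u * s)) _ s (m u * (u * G' x (u * s)))).
    + apply is_derive_scal, (is_derive_comp (G x) (fun s => u * s) s (G' x (u * s)) u); [apply DG|].
      auto_derive; [exact I | ring].
    + intros s'. reflexivity.
    + ring.
  - intros eps he. destruct (cont2_equicont_scaled_snd G' x t HG' eps he) as [eta [heta D]].
    exists eta. split; [exact heta|]. intros s hs u hu.
    replace (m u * u * G' x (u * s) - m u * u * G' x (u * t))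
      with ((m u * u) * (G' x (u * s) - G' x (u * t))) by ring.
    rewrite Rabs_mult, Rabs_mult, (Rabs_right u) by lra.
    specialize (D s hs u hu). specialize (Bm u hu).
    pose proof (Rabs_pos (m u)). pose proof (Rabs_pos (G' x (u * s) - G' x (u * t))).
    assert (Rabs (m u) * u <= 1) by nra. nra.
Qed.

Lemma is_derive_weighted_mean_x m G G' (x t : R) :
  (forall u, 0 <= u <= 1 -> continuity_pt m u) -> (forall u, 0 <= u <= 1 -> Rabs (m u) <= 1) ->
  cont2 G -> cont2 G' -> is_partial_x G G' ->
  is_derive (fun y => weighted_mean m G y t) x (weighted_mean m G' x t).
Proof.
  intros Hm Bm HG HG' DG. unfold weighted_mean.
  apply (is_derive_ImpInt_weighted alpha (fun u y => m u * G y (u * t))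
           (fun u y => m u * G' y (u * t)) x alpha_pos).
  - intros s u hu. apply continuity_pt_fmult; [apply Hm, hu | apply continuity_pt_scaled, HG].
  - intros u hu. apply continuity_pt_fmult; [apply Hm, hu | apply continuity_pt_scaled, HG'].
  - intros s u hu. apply is_derive_scal, DG.
  - intros eps he. destruct (cont2_equicont_fst G' x (Rabs t) HG' eps he) as [eta [heta D]].
    exists eta. split; [exact heta|]. intros y hy u hu.
    rewrite <- Rmult_minus_distr_l, Rabs_mult.
    assert (Rabs (u * t) <= Rabs t)
      by (rewrite Rabs_mult, (Rabs_right u) by lra; pose proof (Rabs_pos t); nra).
    specialize (D y (u * t) hy ltac:(assumption)). specialize (Bm u hu).
    pose proof (Rabs_pos (m u)). pose proof (Rabs_pos (G' y (u * t) - G' x (u * t))). nra.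
Qed.

Lemma weight_power_vanishes_at_1 g : (forall u, 0 <= u <= 1 -> continuity_pt g u) ->
  forall eps, 0 < eps -> exists d, 0 < d /\
    forall q, 1 - d < q < 1 -> Rabs (Rpower (1 - q ^ 2) alpha * g q) < eps.
Proof.
  intros Hg eps he.
  destruct (continuity_ab_maj (fun u => Rabs (g u)) 0 1 ltac:(lra)) as [m [Hm _]].
  { intros u hu. apply (continuity_pt_comp g Rabs); [apply Hg, hu | apply Rcontinuity_abs]. }
  cbv beta in Hm. set (M := Rabs (g m)). assert (hM : 0 <= M) by apply Rabs_pos.
  destruct (Rpower_lt_small alpha alpha_pos (eps / (M + 1))) as [d [hd D]].
  { apply Rdiv_lt_0_compat; lra. }
  exists (Rmin (d / 2) (1 / 2)). split; [apply Rmin_pos; lra|]. intros q hq.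
  pose proof (Rmin_l (d / 2) (1 / 2)). pose proof (Rmin_r (d / 2) (1 / 2)).
  specialize (D (1 - q ^ 2) ltac:(split; nra)). specialize (Hm q ltac:(lra)). fold M in Hm.
  rewrite Rabs_mult, (Rabs_right (Rpower _ _)) by (left; apply exp_pos).
  assert (0 < Rpower (1 - q ^ 2) alpha) by apply exp_pos.
  assert (eps / (M + 1) * M < eps)
    by (apply (Rmult_lt_reg_r (M + 1)); [lra | field_simplify; nra]).
  pose proof (Rabs_pos (g q)).
  assert (Rpower (1 - q ^ 2) alpha * Rabs (g q) <= eps / (M + 1) * M)
    by (apply Rmult_le_compat; lra).
  lra.
Qed.

Lemma weight_power_vanishes_at_0 g : continuity_pt g 0 -> g 0 = 0 ->
  forall eps, 0 < eps -> exists d, 0 < d /\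
    forall p, 0 < p < d -> Rabs (Rpower (1 - p ^ 2) alpha * g p) < eps.
Proof.
  intros Hg g0 eps he. destruct (Hg eps he) as [d [hd D]].
  exists (Rmin d (1 / 2)). split; [apply Rmin_pos; lra|]. intros p hp.
  pose proof (Rmin_l d (1 / 2)). pose proof (Rmin_r d (1 / 2)).
  assert (Dp : Rabs (g p) < eps).
  { rewrite <- (Rminus_0_r (g p)), <- g0. destruct (Req_dec p 0) as [->|hp0]; [lra|].
    apply D. split; [split; [exact I | lra]|].
    simpl; unfold R_dist. rewrite Rminus_0_r, Rabs_right; lra. }
  rewrite Rabs_mult, (Rabs_right (Rpower _ _)) by (left; apply exp_pos).
  assert (Rpower (1 - p ^ 2) alpha <= 1) by (apply Rpower_le_1; [exact alpha_pos | split; nra]).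
  assert (0 < Rpower (1 - p ^ 2) alpha) by apply exp_pos.
  pose proof (Rabs_pos (g p)). nra.
Qed.

(* Integration by parts against [d/du (1 - u^2)^alpha = -2 alpha u epd_weight alpha u]:
   the boundary term vanishes at 1 because of the weight and at 0 because [g 0 = 0]. *)
Lemma is_impint01_weight_parts (g g' : R -> R) :
  (forall u, 0 <= u <= 1 -> continuity_pt g u) -> g 0 = 0 ->
  (forall u, 0 < u < 1 -> is_derive g u (g' u)) -> (forall u, 0 < u < 1 -> continuity_pt g' u) ->
  is_impint01 (fun u => Rpower (1 - u ^ 2) alpha * g' u - 2 * alpha * u * epd_weight alpha u * g u) 0.
Proof.
  intros Hg g0 Dg Hg'.
  apply (is_impint01_derive_vanishing _ (fun u => Rpower (1 - u ^ 2) alpha * g u)).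
  - intros u hu. eapply is_derive_ext_eq;
      [apply (is_derive_mult (K := R_AbsRing));
         [apply is_derive_Rpower_weight; lra | apply Dg, hu | intros; apply Rmult_comm] | |].
    + intros v. reflexivity.
    + change (plus (mult ?a ?b) (mult ?c ?d)) with (a * b + c * d). cbv beta. ring.
  - intros u hu. apply continuity_pt_filterlim.
    apply (continuity_pt_minus (fun u => Rpower (1 - u ^ 2) alpha * g' u)
                               (fun u => 2 * alpha * u * epd_weight alpha u * g u)).
    { apply (continuity_pt_fmult (fun u => Rpower (1 - u ^ 2) alpha) g').
    + apply continuity_pt_filterlim.
      apply (ex_derive_continuous (V := R_NormedModule) (fun u => Rpower (1 - u ^ 2) alpha)).
      eexists. apply is_derive_Rpower_weight. lra.
    + apply Hg', hu. }
    apply (continuity_pt_fmult (fun u => 2 * alpha * u * epd_weight alpha u) g).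
    + apply continuity_pt_filterlim.
      apply (ex_derive_continuous (V := R_NormedModule) (fun u => 2 * alpha * u * epd_weight alpha u)).
      unfold epd_weight, Rpower. auto_derive. nra.
    + apply Hg. lra.
  - apply weight_power_vanishes_at_1, Hg.
  - apply weight_power_vanishes_at_0; [apply Hg; lra | exact g0].
Qed.

End Weighted_means.

Lemma deriv_within_half_line (f g : R -> R) x l : 0 <= x -> (forall s, 0 <= s -> f s = g s) ->
  is_derive g x l -> deriv_within half_line f x l.
Proof.
  intros hx E D eps he. apply is_derive_Reals in D. destruct (D eps he) as [d Hd].
  exists d. split; [apply cond_pos|]. intros h hh hd hD. unfold half_line in hD.
  rewrite !E by lra. apply Hd; assumption.
Qed.

(** * The forced wave equation and the Euler-Poisson-Darboux problem *)

Section Forced_wave.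

Variables (c : R) (Fe F1e : R -> R -> R).
Hypothesis c_pos : 0 < c.
Hypothesis Fe_cont : cont2 Fe.
Hypothesis F1e_cont : cont2 F1e.
Hypothesis Fe_partial : is_partial_x Fe F1e.

Definition prim_x (z s : R) : R := RInt (fun y => Fe y s) 0 z.

Lemma cont2_prim_x : cont2 prim_x.
Proof.
  intros z s. apply (continuity_2d_pt_swap (fun a b => RInt (fun y => Fe y a) 0 b)).
  apply (cont2_RInt_param (fun a y => Fe y a)). intros a b. apply continuity_2d_pt_swap, Fe_cont.
Qed.

Lemma is_partial_x_prim_x : is_partial_x prim_x Fe.
Proof.
  intros z s.
  apply (is_derive_RInt (V := R_NormedModule) (fun y => Fe y s)
           (fun b => RInt (fun y => Fe y s) 0 b) 0 z).
  - apply filter_forall. intros b. apply RInt_correct_R, (ex_RInt_cont2 (fun s y => Fe y s)).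
    intros a b'. apply continuity_2d_pt_swap, Fe_cont.
  - apply continuity_pt_filterlim, (continuity_2d_pt_fst Fe), Fe_cont.
Qed.

(* Duhamel's formula: the inner integral over [x - c(t-s), x + c(t-s)] is a difference of
   values of [prim_x] along the two characteristics through [(x,t)]. *)
Definition wave (x t : R) : R := / (2 * c) * (char_int prim_x c x t - char_int prim_x (- c) x t).
Definition wave_t (x t : R) : R := / 2 * (char_int Fe c x t + char_int Fe (- c) x t).
Definition wave_tt (x t : R) : R := Fe x t + c / 2 * (char_int F1e c x t - char_int F1e (- c) x t).
Definition wave_x (x t : R) : R := / (2 * c) * (char_int Fe c x t - char_int Fe (- c) x t).
Definition wave_xx (x t : R) : R := / (2 * c) * (char_int F1e c x t - char_int F1e (- c) x t).

Lemma is_derive_wave_t x t : is_derive (wave x) t (wave_t x t).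
Proof.
  eapply is_derive_ext_eq.
  - eapply (is_derive_lincomb _ _ t _ _ (/ (2 * c)) (- / (2 * c)));
      [apply (is_derive_char_int_t prim_x Fe c x t) | apply (is_derive_char_int_t prim_x Fe (- c) x t)];
      auto using cont2_prim_x, is_partial_x_prim_x.
  - intros s. unfold wave. ring.
  - unfold wave_t. field. lra.
Qed.

Lemma is_derive_wave_tt x t : is_derive (wave_t x) t (wave_tt x t).
Proof.
  eapply is_derive_ext_eq.
  - eapply (is_derive_lincomb _ _ t _ _ (/ 2) (/ 2));
      [apply (is_derive_char_int_t Fe F1e c x t) | apply (is_derive_char_int_t Fe F1e (- c) x t)];
      assumption.
  - intros s. unfold wave_t. ring.
  - unfold wave_tt. field.
Qed.

Lemma is_derive_wave_x x t : is_derive (fun y => wave y t) x (wave_x x t).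
Proof.
  eapply is_derive_ext_eq.
  - eapply (is_derive_lincomb _ _ x _ _ (/ (2 * c)) (- / (2 * c)));
      [apply (is_derive_char_int_x prim_x Fe c x t) | apply (is_derive_char_int_x prim_x Fe (- c) x t)];
      auto using cont2_prim_x, is_partial_x_prim_x.
  - intros y. unfold wave. ring.
  - unfold wave_x. ring.
Qed.

Lemma is_derive_wave_xx x t : is_derive (fun y => wave_x y t) x (wave_xx x t).
Proof.
  eapply is_derive_ext_eq.
  - eapply (is_derive_lincomb _ _ x _ _ (/ (2 * c)) (- / (2 * c)));
      [apply (is_derive_char_int_x Fe F1e c x t) | apply (is_derive_char_int_x Fe F1e (- c) x t)];
      assumption.
  - intros y. unfold wave_x. ring.
  - unfold wave_xx. ring.
Qed.

Lemma wave_equation x t : wave_tt x t = c ^ 2 * wave_xx x t + Fe x t.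
Proof. unfold wave_tt, wave_xx. field. lra. Qed.

Lemma wave_0 x : wave x 0 = 0.
Proof. unfold wave. rewrite !char_int_0. ring. Qed.

Lemma wave_t_0 x : wave_t x 0 = 0.
Proof. unfold wave_t. rewrite !char_int_0. ring. Qed.

Lemma cont2_char_int_lincomb k k1 k2 : cont2 k ->
  cont2 (fun x t => k1 * char_int k c x t + k2 * char_int k (- c) x t).
Proof. intros Hk x t. apply continuity_2d_pt_lincomb; apply cont2_char_int, Hk. Qed.

Lemma cont2_wave : cont2 wave.
Proof.
  intros x t. eapply continuity_2d_pt_ext;
    [|apply (cont2_char_int_lincomb prim_x (/ (2 * c)) (- / (2 * c)) cont2_prim_x)].
  intros; unfold wave; ring.
Qed.

Lemma cont2_wave_t : cont2 wave_t.
Proof.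
  intros x t. eapply continuity_2d_pt_ext; [|apply (cont2_char_int_lincomb Fe (/ 2) (/ 2) Fe_cont)].
  intros; unfold wave_t; ring.
Qed.

Lemma cont2_wave_x : cont2 wave_x.
Proof.
  intros x t. eapply continuity_2d_pt_ext;
    [|apply (cont2_char_int_lincomb Fe (/ (2 * c)) (- / (2 * c)) Fe_cont)].
  intros; unfold wave_x; ring.
Qed.

Lemma cont2_wave_xx : cont2 wave_xx.
Proof.
  intros x t. eapply continuity_2d_pt_ext;
    [|apply (cont2_char_int_lincomb F1e (/ (2 * c)) (- / (2 * c)) F1e_cont)].
  intros; unfold wave_xx; ring.
Qed.

Lemma cont2_wave_tt : cont2 wave_tt.
Proof.
  intros x t. eapply continuity_2d_pt_ext;
    [|apply (continuity_2d_pt_lincomb Fe (fun x t => c / 2 * char_int F1e c x t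
                                         + - (c / 2) * char_int F1e (- c) x t) 1 1 x t);
      [apply Fe_cont | apply cont2_char_int_lincomb, F1e_cont]].
  intros; unfold wave_tt; ring.
Qed.

Variable F : R -> R -> R.
Hypothesis Fe_ext : forall y s, 0 <= s -> Fe y s = F y s.

Lemma wave_sol_eq x t : 0 <= t -> wave_sol c F x t = wave x t.
Proof.
  intros ht. unfold wave_sol, wave, char_int.
  assert (Inner : forall s, 0 < s < t ->
    Defs.RInt (fun y => F y s) (x - c * (t - s)) (x + c * (t - s))
    = 1 * prim_x (x + c * (t - s)) s + -1 * prim_x (x + - c * (t - s)) s).
  { intros s hs. replace (fun y => F y s) with (fun y => Fe y s)
      by (apply functional_extensionality; intros y; apply Fe_ext; lra).
    assert (ex : forall a b, ex_RInt (fun y => Fe y s) a b).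
    { intros a b. apply (ex_RInt_cont2 (fun s y => Fe y s)).
      intros a' b'. apply continuity_2d_pt_swap, Fe_cont. }
    rewrite Riemann_RInt_eq by apply ex. unfold prim_x. apply is_RInt_unique.
    replace (1 * RInt (fun y => Fe y s) 0 (x + c * (t - s))
             + -1 * RInt (fun y => Fe y s) 0 (x + - c * (t - s)))
      with (- RInt (fun y => Fe y s) 0 (x + - c * (t - s))
            + RInt (fun y => Fe y s) 0 (x + c * (t - s))) by ring.
    replace (x - c * (t - s)) with (x + - c * (t - s)) by ring.
    apply is_RInt_Chasles_R with 0; [apply (is_RInt_swap (V := R_NormedModule))|];
      apply RInt_correct_R, ex. }
  rewrite Riemann_RInt_eq.
  - rewrite (RInt_ext _ _ 0 t (fun s hs => Inner s ltac:(rewrite Rmin_left, Rmax_right in hs by lra;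
                                                       exact hs))).
    rewrite (is_RInt_unique _ _ _ _ (is_RInt_lin _ _ 0 t _ _ 1 (-1)
      (RInt_correct_R _ _ _ (ex_RInt_char_integrand prim_x c x t 0 t cont2_prim_x))
      (RInt_correct_R _ _ _ (ex_RInt_char_integrand prim_x (- c) x t 0 t cont2_prim_x)))).
    ring.
  - eapply ex_RInt_ext;
      [intros s hs; symmetry; apply Inner; rewrite Rmin_left, Rmax_right in hs by lra; exact hs|].
    eexists. apply is_RInt_lin; apply RInt_correct_R, ex_RInt_char_integrand, cont2_prim_x.
Qed.

Section Euler_Poisson_Darboux.

Variable alpha : R.
Hypothesis alpha_pos : 0 < alpha.

Lemma is_impint01_wave_sol x t : 0 <= t ->
  is_impint01 (fun u => Rpower (1 - u ^ 2) (alpha - 1) * wave_sol c F x (u * t))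
              (weighted_mean alpha (fun _ => 1) wave x t).
Proof.
  intros ht. eapply is_impint01_ext;
    [|apply is_impint01_weighted_mean;
        [exact alpha_pos | intros; apply continuity_pt_one | apply cont2_wave]].
  intros u hu. unfold epd_weight. rewrite wave_sol_eq by nra. ring.
Qed.

Lemma is_impint01_forcing x t : 0 <= t ->
  is_impint01 (fun u => Rpower (1 - u ^ 2) (alpha - 1) * F x (u * t))
              (weighted_mean alpha (fun _ => 1) Fe x t).
Proof.
  intros ht. eapply is_impint01_ext;
    [|apply is_impint01_weighted_mean;
        [exact alpha_pos | intros; apply continuity_pt_one | exact Fe_cont]].
  intros u hu. unfold epd_weight. rewrite Fe_ext by nra. ring.
Qed.

Lemma epd_sol_eq x t : 0 <= t ->
  epd_sol c alpha F x t = 2 / Beta alpha (1/2) * weighted_mean alpha (fun _ => 1) wave x t.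
Proof.
  intros ht. unfold epd_sol. f_equal.
  apply is_impint01_unique, is_impint01_wave_sol, ht.
Qed.

Lemma is_impint01_wave_t_parts x t :
  is_impint01 (fun u => Rpower (1 - u ^ 2) alpha * (t * wave_tt x (u * t))
                        - 2 * alpha * u * epd_weight alpha u * wave_t x (u * t)) 0.
Proof.
  apply is_impint01_weight_parts; [exact alpha_pos | | | |].
  - intros u _. apply continuity_pt_scaled, cont2_wave_t.
  - rewrite Rmult_0_l. apply wave_t_0.
  - intros u _. apply (is_derive_comp (wave_t x) (fun u => u * t) u (wave_tt x (u * t)) t).
    + apply is_derive_wave_tt.
    + auto_derive; [exact I | ring].
  - intros u _. apply continuity_pt_fmult; [|apply continuity_pt_scaled, cont2_wave_tt].
    apply continuity_pt_const. intros ? ?. reflexivity.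
Qed.

Lemma epd_mean_identity x t : 0 < t ->
  weighted_mean alpha (fun u => u * u) wave_tt x t
  + 2 * alpha / t * weighted_mean alpha (fun u => u) wave_t x t
  = c ^ 2 * weighted_mean alpha (fun _ => 1) wave_xx x t + weighted_mean alpha (fun _ => 1) Fe x t.
Proof.
  intros ht.
  assert (Hone : forall u, 0 <= u <= 1 -> continuity_pt (fun _ => 1) u)
    by (intros; apply continuity_pt_one).
  assert (Hid : forall u, 0 <= u <= 1 -> continuity_pt (fun u => u) u)
    by (intros; apply continuity_pt_id).
  assert (Hsq : forall u, 0 <= u <= 1 -> continuity_pt (fun u => u * u) u)
    by (intros; apply continuity_pt_fmult; apply continuity_pt_id).
  pose proof (is_impint01_weighted_mean alpha alpha_pos _ _ x t Hsq cont2_wave_tt) as Itt2.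
  pose proof (is_impint01_weighted_mean alpha alpha_pos _ _ x t Hid cont2_wave_t) as It1.
  pose proof (is_impint01_weighted_mean alpha alpha_pos _ _ x t Hone cont2_wave_tt) as Itt.
  pose proof (is_impint01_weighted_mean alpha alpha_pos _ _ x t Hone cont2_wave_xx) as Ixx.
  pose proof (is_impint01_weighted_mean alpha alpha_pos _ _ x t Hone Fe_cont) as IF.
  pose proof (is_impint01_wave_t_parts x t) as Parts.
  assert (E1 : 0 = 1 * (t * weighted_mean alpha (fun _ => 1) wave_tt x t
                        + - t * weighted_mean alpha (fun u => u * u) wave_tt x t)
                   + - (2 * alpha) * weighted_mean alpha (fun u => u) wave_t x t).
  { apply (is_impint01_eq _ _ _ Parts). eapply is_impint01_ext;
      [|exact (is_impint01_lin _ _ _ _ 1 (- (2 * alpha))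
                 (is_impint01_lin _ _ _ _ t (- t) Itt Itt2) It1)].
    intros u hu. rewrite (Rpower_pred alpha (1 - u ^ 2)) by nra. unfold epd_weight. ring. }
  assert (E2 : weighted_mean alpha (fun _ => 1) wave_tt x t
               = c ^ 2 * weighted_mean alpha (fun _ => 1) wave_xx x t
                 + 1 * weighted_mean alpha (fun _ => 1) Fe x t).
  { apply (is_impint01_eq _ _ _ Itt).
    eapply is_impint01_ext; [|exact (is_impint01_lin _ _ _ _ (c ^ 2) 1 Ixx IF)].
    intros u _. rewrite wave_equation. ring. }
  apply (Rmult_eq_reg_l t); [|lra]. field_simplify; [|lra]. nra.
Qed.

Lemma is_derive_mean_wave_t x t :
  is_derive (weighted_mean alpha (fun _ => 1) wave x) t (weighted_mean alpha (fun u => u) wave_t x t).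
Proof.
  apply is_derive_weighted_mean_t; auto using alpha_pos, continuity_pt_one, cont2_wave, cont2_wave_t,
    is_derive_wave_t.
  - intros u _. rewrite Rabs_R1. lra.
  - intros u. ring.
Qed.

Lemma is_derive_mean_wave_tt x t :
  is_derive (weighted_mean alpha (fun u => u) wave_t x) t
            (weighted_mean alpha (fun u => u * u) wave_tt x t).
Proof.
  apply is_derive_weighted_mean_t; auto using alpha_pos, continuity_pt_id, cont2_wave_t, cont2_wave_tt,
    is_derive_wave_tt.
  intros u hu. rewrite Rabs_right; lra.
Qed.

Lemma is_derive_mean_wave_x x t :
  is_derive (fun y => weighted_mean alpha (fun _ => 1) wave y t) x
            (weighted_mean alpha (fun _ => 1) wave_x x t).
Proof.
  apply is_derive_weighted_mean_x; auto using alpha_pos, continuity_pt_one, cont2_wave, cont2_wave_x.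
  - intros u _. rewrite Rabs_R1. lra.
  - intros z s. apply is_derive_wave_x.
Qed.

Lemma is_derive_mean_wave_xx x t :
  is_derive (fun y => weighted_mean alpha (fun _ => 1) wave_x y t) x
            (weighted_mean alpha (fun _ => 1) wave_xx x t).
Proof.
  apply is_derive_weighted_mean_x; auto using alpha_pos, continuity_pt_one, cont2_wave_x, cont2_wave_xx.
  - intros u _. rewrite Rabs_R1. lra.
  - intros z s. apply is_derive_wave_xx.
Qed.

Lemma epd_sol_0 x : epd_sol c alpha F x 0 = 0.
Proof. rewrite epd_sol_eq, weighted_mean_at_0 by (apply wave_0 || lra). ring. Qed.

Lemma epd_sol_deriv_0 x : deriv_within half_line (fun s => epd_sol c alpha F x s) 0 0.
Proof.
  apply (deriv_within_half_line _
           (fun s => 2 / Beta alpha (1/2) * weighted_mean alpha (fun _ => 1) wave x s));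
    [lra | intros s hs; apply epd_sol_eq, hs|].
  eapply is_derive_ext_eq; [apply is_derive_scal, is_derive_mean_wave_t | intros s; reflexivity|].
  rewrite weighted_mean_at_0 by apply wave_t_0. ring.
Qed.

Lemma epd_sol_pde : exists vt vtt vx vxx : R -> R -> R,
  forall x t, 0 < t ->
    derivable_pt_lim (fun s => epd_sol c alpha F x s) t (vt x t) /\
    derivable_pt_lim (fun s => vt x s) t (vtt x t) /\
    derivable_pt_lim (fun y => epd_sol c alpha F y t) x (vx x t) /\
    derivable_pt_lim (fun y => vx y t) x (vxx x t) /\
    vtt x t + 2 * alpha / t * vt x t =
      c ^ 2 * vxx x t
      + 2 / Beta alpha (1/2) * ImpInt (fun u => Rpower (1 - u ^ 2) (alpha - 1) * F x (u * t)) 0 1.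
Proof.
  set (k := 2 / Beta alpha (1/2)).
  exists (fun x t => k * weighted_mean alpha (fun u => u) wave_t x t),
         (fun x t => k * weighted_mean alpha (fun u => u * u) wave_tt x t),
         (fun x t => k * weighted_mean alpha (fun _ => 1) wave_x x t),
         (fun x t => k * weighted_mean alpha (fun _ => 1) wave_xx x t).
  intros x t ht. split; [|split; [|split; [|split]]]; try apply is_derive_Reals.
  - apply (is_derive_ext_loc (fun s => k * weighted_mean alpha (fun _ => 1) wave x s)).
    + exists (mkposreal t ht). intros s hs. apply Rabs_lt_between' in hs. simpl in hs.
      symmetry. apply epd_sol_eq. lra.
    + apply is_derive_scal, is_derive_mean_wave_t.
  - apply is_derive_scal, is_derive_mean_wave_tt.
  - apply (is_derive_ext (fun y => k * weighted_mean alpha (fun _ => 1) wave y t)).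
    + intros y. symmetry. apply epd_sol_eq. lra.
    + apply is_derive_scal, is_derive_mean_wave_x.
  - apply is_derive_scal, is_derive_mean_wave_xx.
  - rewrite (is_impint01_unique _ _ (is_impint01_forcing x t ltac:(lra))).
    transitivity (k * (weighted_mean alpha (fun u => u * u) wave_tt x t
                       + 2 * alpha / t * weighted_mean alpha (fun u => u) wave_t x t)); [ring|].
    rewrite epd_mean_identity by exact ht. ring.
Qed.

End Euler_Poisson_Darboux.

End Forced_wave.

Lemma Rmax_0_lipschitz v t : Rabs (Rmax v 0 - Rmax t 0) <= Rabs (v - t).
Proof.
  unfold Rmax. destruct (Rle_dec v 0), (Rle_dec t 0); apply Rabs_le; unfold Rabs;
    destruct (Rcase_abs (v - t)); lra.
Qed.

Lemma cont2_extend_below G : cont_half G -> cont2 (fun x t => G x (Rmax t 0)).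
Proof.
  intros HG x t eps. destruct (HG x (Rmax t 0) (Rmax_r t 0) eps (cond_pos eps)) as [d [hd D]].
  exists (mkposreal d hd). simpl. intros u v hu hv. apply D; [apply Rmax_r | exact hu|].
  eapply Rle_lt_trans; [apply Rmax_0_lipschitz | exact hv].
Qed.

(* Below t = 0 both are extended constantly in t. *)
Lemma C2_half_extend F : C2_half F -> exists Fe F1e : R -> R -> R,
  cont2 Fe /\ cont2 F1e /\ is_partial_x Fe F1e /\ (forall y s, 0 <= s -> Fe y s = F y s).
Proof.
  intros [F1 [F2 [F11 [F12 [F21 [F22 [HD [cF [cF1 _]]]]]]]]].
  exists (fun x t => F x (Rmax t 0)), (fun x t => F1 x (Rmax t 0)).
  split; [|split; [|split]].
  - apply cont2_extend_below, cF.
  - apply cont2_extend_below, cF1.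
  - intros z s. apply is_derive_Reals, (HD z (Rmax s 0) (Rmax_r s 0)).
  - intros y s hs. rewrite Rmax_left by lra. reflexivity.
Qed.

Theorem theorem2p1 (c alpha : R) (F : R -> R -> R)
  (hc : 0 < c) (halpha : 0 < alpha) (hF : C2_half F) :
  (* the defining improper integrals converge *)
  (forall x t, 0 <= t ->
     exists l, is_impint (fun u => Rpower (1 - u ^ 2) (alpha - 1)
                                   * wave_sol c F x (u * t)) 0 1 l) /\
  (forall x t, 0 <= t ->
     exists l, is_impint (fun u => Rpower (1 - u ^ 2) (alpha - 1) * F x (u * t)) 0 1 l) /\
  (* initial conditions *)
  (forall x, epd_sol c alpha F x 0 = 0) /\
  (forall x, deriv_within half_line (fun s => epd_sol c alpha F x s) 0 0) /\
  (* the non-homogeneous Euler-Poisson-Darboux equation for t > 0 *)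
  (exists vt vtt vx vxx : R -> R -> R,
     forall x t, 0 < t ->
       derivable_pt_lim (fun s => epd_sol c alpha F x s) t (vt x t) /\
       derivable_pt_lim (fun s => vt x s) t (vtt x t) /\
       derivable_pt_lim (fun y => epd_sol c alpha F y t) x (vx x t) /\
       derivable_pt_lim (fun y => vx y t) x (vxx x t) /\
       vtt x t + 2 * alpha / t * vt x t =
         c ^ 2 * vxx x t
         + 2 / Beta alpha (1/2)
           * ImpInt (fun u => Rpower (1 - u ^ 2) (alpha - 1) * F x (u * t)) 0 1).
Proof.
  destruct (C2_half_extend F hF) as [Fe [F1e [HFe [HF1e [DFe EFe]]]]].
  split; [|split; [|split; [|split]]].
  - intros x t ht. eexists. apply is_impint01_iff.
    apply (is_impint01_wave_sol c Fe); assumption.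
  - intros x t ht. eexists. apply is_impint01_iff.
    apply (is_impint01_forcing Fe); assumption.
  - intros x. apply (epd_sol_0 c Fe); assumption.
  - intros x. apply (epd_sol_deriv_0 c Fe); assumption.
  - apply (epd_sol_pde c Fe F1e); assumption.
Qed.
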